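(* Let $\kappa\ge0$, $\beta>0$ and $U\in\mathbb{R}$. For $n\ge0$ sufficiently small (so that $t(n):=1+Un>0$), put $G(n):=t(n)^2+\kappa^2$ and let $\lambda^2(n)$ denote the unique positive solution $x$ of $$G(n)\Big[n\,t(n)^2+\frac{\beta^2}{16x}G(n)\Big]=x\,t(n)^2 .$$ Define $\delta(n):=4\lambda^2(n)-\beta(1+\kappa^2)$. Then, as $n\to0^+$, $$\delta(n)=A\,n+B\,n^2+C\,n^3+O(n^4),$$ where \begin{align*} A&=2(1+\kappa^2)-\beta U(\kappa^2-1),\\ B&=\beta\kappa^2U^2+4U+\frac{2(1+\kappa^2)}{\beta},\\ C&=\frac U\beta\Big(-\beta^2\kappa^2U^2+2\beta U+2\kappa^2+6\Big). \end{align*}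
   Context: The defining equation for $\lambda^2(n)$ is the superradiant steady-state equation $f(s)=0$ of the mean-field dissipative quantum Rabi model with Kerr nonlinearity, with $s=Un$ and $n=|\alpha|^2$ the photon-number order parameter, in normalized units ($\kappa,\lambda$ stand for $\kappa/\omega_c,\lambda/\omega_c$, $\beta=\omega_a/\omega_c$, $U=2KN/\omega_c$); multiplied by $x$ it is a quadratic in $x$ with exactly one positive root. $\delta$ measures the distance of the coupling from the normal-phase threshold $4\lambda_c^2=\beta(1+\kappa^2)$. *)

From Stdlib Require Import Reals ClassicalEpsilon.
Open Scope R_scope.

Definition tfun (U n : R) : R := 1 + U * n.

Definition Gfun (kappa U n : R) : R := (tfun U n) ^ 2 + kappa ^ 2.

Definition lam2_eq (kappa beta U n x : R) : Prop :=
  Gfun kappa U n * (n * (tfun U n) ^ 2 + beta ^ 2 / (16 * x) * Gfun kappa U n)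
  = x * (tfun U n) ^ 2.

(* lambda^2(n): "the" positive solution x of the equation, chosen by
   Hilbert's epsilon (it is the unique one whenever t(n) > 0). *)
Definition lambda2 (kappa beta U n : R) : R :=
  epsilon (inhabits 0) (fun x => 0 < x /\ lam2_eq kappa beta U n x).

Definition delta (kappa beta U n : R) : R :=
  4 * lambda2 kappa beta U n - beta * (1 + kappa ^ 2).

Definition coefA (kappa beta U : R) : R :=
  2 * (1 + kappa ^ 2) - beta * U * (kappa ^ 2 - 1).
Definition coefB (kappa beta U : R) : R :=
  beta * kappa ^ 2 * U ^ 2 + 4 * U + 2 * (1 + kappa ^ 2) / beta.
Definition coefC (kappa beta U : R) : R :=
  U / beta * (- beta ^ 2 * kappa ^ 2 * U ^ 2 + 2 * beta * U + 2 * kappa ^ 2 + 6).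

(* Multiplied by x > 0 the defining equation becomes the quadratic
   t^2 x^2 - G n t^2 x - beta^2 G^2 / 16 = 0, whose constant term is negative,
   so it has exactly one positive root, given by the quadratic formula:
   lambda^2 = G (2 n t + S) / (4 t) with S = sqrt (beta^2 + 4 n^2 t^2).
   Writing S = beta + 2 n^2 t^2 / beta - (S - beta)^2 / (2 beta) splits delta into
   a rational function of n, whose Taylor polynomial of degree 3 is A n + B n^2 + C n^3
   with an explicit remainder n^4 Q(n) / t, and the term G (S - beta)^2 / (2 beta t),
   which is O(n^4) because S - beta = 4 n^2 t^2 / (S + beta) <= 2 n^2 t^2 / beta. *)

From Stdlib Require Import Reals Lra Psatz ClassicalEpsilon.
Open Scope R_scope.

Lemma lam2_eq_quadratic (G t n b x : R) : x <> 0 ->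
  G * (n * t ^ 2 + b ^ 2 / (16 * x) * G) = x * t ^ 2 <->
  t ^ 2 * x ^ 2 - G * n * t ^ 2 * x - b ^ 2 * G ^ 2 / 16 = 0.
Proof.
  intros hx.
  replace (t ^ 2 * x ^ 2 - G * n * t ^ 2 * x - b ^ 2 * G ^ 2 / 16)
    with (x * (x * t ^ 2 - G * (n * t ^ 2 + b ^ 2 / (16 * x) * G))) by (field; exact hx).
  split; intros h.
  - rewrite h; ring.
  - apply Rmult_integral in h as [h | h]; [contradiction | lra].
Qed.

Lemma pos_root_unique (a p c x y : R) : 0 < a -> 0 < c -> 0 < x -> 0 < y ->
  a * x ^ 2 - p * x - c = 0 -> a * y ^ 2 - p * y - c = 0 -> x = y.
Proof.
  intros ha hc hx hy hrx hry.
  destruct (Req_dec x y) as [| hxy]; [assumption | exfalso].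
  (* two distinct roots have sum p / a, hence product - c / a < 0 *)
  assert (hsum : a * (x + y) = p).
  { apply (Rmult_eq_reg_l (x - y)); [nra | lra]. }
  assert (0 < a * x * y) by (apply Rmult_lt_0_compat; [apply Rmult_lt_0_compat |]; lra).
  nra.
Qed.

Lemma sqrt_sq_add_eq (b d S : R) : 0 < b -> S ^ 2 = b ^ 2 + d ->
  S = b + d / (2 * b) - (S - b) ^ 2 / (2 * b).
Proof.
  intros hb hS.
  replace d with (S ^ 2 - b ^ 2) by lra.
  field; lra.
Qed.

Lemma sqrt_sub_sq_le (b d S : R) : 0 < b -> 0 <= d -> 0 <= S -> S ^ 2 = b ^ 2 + d ->
  (S - b) ^ 2 <= d ^ 2 / (4 * b ^ 2).
Proof.
  intros hb hd hS hSd.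
  assert (hSb : 0 <= S - b) by nra.
  assert (hlin : (S - b) * (2 * b) <= d) by nra.
  apply (Rmult_le_reg_r (4 * b ^ 2)); [nra |].
  replace (d ^ 2 / (4 * b ^ 2) * (4 * b ^ 2)) with (d ^ 2) by (field; lra).
  replace ((S - b) ^ 2 * (4 * b ^ 2)) with (((S - b) * (2 * b)) ^ 2) by ring.
  apply pow_incr. nra.
Qed.

Lemma tfun_bounds (U n : R) : Rabs (U * n) <= 1 / 2 -> 1 / 2 <= tfun U n <= 3 / 2.
Proof.
  intros h. unfold tfun.
  pose proof (Rle_abs (U * n)). pose proof (Rle_abs (- (U * n))).
  rewrite Rabs_Ropp in *. lra.
Qed.

Lemma small_n_bounds (U n : R) : 0 < n < / (2 * (Rabs U + 1)) -> n <= 1 /\ Rabs (U * n) <= 1 / 2.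
Proof.
  intros [hn hne].
  pose proof (Rabs_pos U) as hU.
  assert (hlt : n * (2 * (Rabs U + 1)) < 1).
  { set (m := 2 * (Rabs U + 1)) in *.
    assert (hm : / m * m = 1) by (apply Rinv_l; unfold m; lra).
    rewrite <- hm. apply Rmult_lt_compat_r; unfold m in *; lra. }
  rewrite Rabs_mult, (Rabs_right n) by lra.
  split; nra.
Qed.

Section Expansion.

Variables kappa beta U : R.
Hypothesis hbeta : 0 < beta.

Definition disc_root (n : R) : R := sqrt (beta ^ 2 + 4 * n ^ 2 * tfun U n ^ 2).

Definition lam2_root (n : R) : R :=
  Gfun kappa U n * (2 * n * tfun U n + disc_root n) / (4 * tfun U n).

Definition delta_rem_coef (n : R) : R :=
  (6 * U ^ 2 + kappa ^ 2 * beta ^ 2 * U ^ 4 + 8 * U ^ 3 * n + 2 * U ^ 4 * n ^ 2) / beta.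

Lemma disc_root_sq (n : R) : disc_root n ^ 2 = beta ^ 2 + 4 * n ^ 2 * tfun U n ^ 2.
Proof. apply pow2_sqrt. nra. Qed.

Lemma disc_root_pos (n : R) : 0 < disc_root n.
Proof. apply sqrt_lt_R0. nra. Qed.

Lemma Gfun_pos (n : R) : tfun U n <> 0 -> 0 < Gfun kappa U n.
Proof.
  intros ht. unfold Gfun.
  assert (0 < tfun U n ^ 2) by (rewrite <- Rsqr_pow2; apply Rsqr_pos_lt; exact ht).
  nra.
Qed.

Lemma lam2_root_pos (n : R) : 0 <= n -> 0 < tfun U n -> 0 < lam2_root n.
Proof.
  intros hn ht. pose proof (Gfun_pos n ltac:(lra)). pose proof (disc_root_pos n).
  unfold lam2_root. apply Rdiv_lt_0_compat; [apply Rmult_lt_0_compat |]; nra.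
Qed.

Lemma lam2_root_quadratic (n : R) : tfun U n <> 0 ->
  tfun U n ^ 2 * lam2_root n ^ 2 - Gfun kappa U n * n * tfun U n ^ 2 * lam2_root n
  - beta ^ 2 * Gfun kappa U n ^ 2 / 16 = 0.
Proof.
  intros ht. pose proof (disc_root_sq n) as hS. unfold lam2_root.
  set (S := disc_root n) in *. set (t := tfun U n) in *. set (G := Gfun kappa U n).
  replace (t ^ 2 * (G * (2 * n * t + S) / (4 * t)) ^ 2
           - G * n * t ^ 2 * (G * (2 * n * t + S) / (4 * t)) - beta ^ 2 * G ^ 2 / 16)
    with (G ^ 2 * (S ^ 2 - 4 * n ^ 2 * t ^ 2 - beta ^ 2) / 16) by (field; exact ht).
  rewrite hS. field.
Qed.

Lemma lam2_eq_iff_root (n x : R) : 0 <= n -> 0 < tfun U n ->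
  0 < x /\ lam2_eq kappa beta U n x <-> x = lam2_root n.
Proof.
  intros hn ht.
  pose proof (Gfun_pos n ltac:(lra)) as hG.
  pose proof (lam2_root_pos n hn ht) as hx0.
  split.
  - intros [hx he]. unfold lam2_eq in he.
    apply lam2_eq_quadratic in he; [| lra].
    apply (pos_root_unique (tfun U n ^ 2) (Gfun kappa U n * n * tfun U n ^ 2)
             (beta ^ 2 * Gfun kappa U n ^ 2 / 16)); try assumption.
    + apply pow_lt. exact ht.
    + apply Rdiv_lt_0_compat; [apply Rmult_lt_0_compat; apply pow_lt |]; lra.
    + apply lam2_root_quadratic. lra.
  - intros ->. split; [exact hx0 |].
    unfold lam2_eq. apply lam2_eq_quadratic; [lra |].
    apply lam2_root_quadratic. lra.
Qed.

Lemma lambda2_root (n : R) : 0 <= n -> 0 < tfun U n -> lambda2 kappa beta U n = lam2_root n.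
Proof.
  intros hn ht. apply (lam2_eq_iff_root n _ hn ht).
  unfold lambda2. apply epsilon_spec.
  exists (lam2_root n). apply (lam2_eq_iff_root n _ hn ht). reflexivity.
Qed.

Lemma lam2_root_expansion (n : R) : tfun U n <> 0 ->
  4 * lam2_root n - beta * (1 + kappa ^ 2)
  - (coefA kappa beta U * n + coefB kappa beta U * n ^ 2 + coefC kappa beta U * n ^ 3)
  = n ^ 4 * delta_rem_coef n / tfun U n
    - Gfun kappa U n * (disc_root n - beta) ^ 2 / (2 * beta * tfun U n).
Proof.
  intros ht.
  pose proof (sqrt_sq_add_eq beta (4 * n ^ 2 * tfun U n ^ 2) (disc_root n) hbeta
                (disc_root_sq n)) as hS.
  unfold lam2_root. rewrite hS at 1.
  unfold delta_rem_coef, coefA, coefB, coefC, Gfun. unfold tfun in *.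
  field. lra.
Qed.

Lemma delta_rem_coef_bound (n : R) : 0 <= n <= 1 ->
  Rabs (delta_rem_coef n)
  <= (6 * U ^ 2 + kappa ^ 2 * beta ^ 2 * U ^ 4 + 8 * Rabs U ^ 3 + 2 * U ^ 4) / beta.
Proof.
  intros hn. unfold delta_rem_coef, Rdiv.
  rewrite Rabs_mult, (Rabs_right (/ beta)) by (left; apply Rinv_0_lt_compat; exact hbeta).
  apply Rmult_le_compat_r; [left; apply Rinv_0_lt_compat; exact hbeta |].
  assert (hU3 : Rabs (U ^ 3 * n) <= Rabs U ^ 3).
  { rewrite Rabs_mult, (Rabs_right n) by lra.
    pose proof (Rabs_pos (U ^ 3)). rewrite <- RPow_abs in *. nra. }
  pose proof (Rle_abs (U ^ 3 * n)). pose proof (Rle_abs (- (U ^ 3 * n))).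
  rewrite Rabs_Ropp in *.
  assert (hU4 : 0 <= U ^ 4) by (replace (U ^ 4) with ((U ^ 2) ^ 2) by ring; apply pow2_ge_0).
  assert (hn2 : 0 <= n ^ 2 <= 1) by (split; [apply pow2_ge_0 | nra]).
  assert (0 <= U ^ 4 * n ^ 2 <= U ^ 4) by (split; nra).
  assert (0 <= kappa ^ 2 * beta ^ 2 * U ^ 4).
  { apply Rmult_le_pos; [apply Rmult_le_pos; apply pow2_ge_0 | exact hU4]. }
  pose proof (pow2_ge_0 U).
  apply Rabs_le. split; nra.
Qed.

Lemma disc_root_remainder_bound (n : R) : 0 <= n -> 1 / 2 <= tfun U n <= 3 / 2 ->
  Gfun kappa U n * (disc_root n - beta) ^ 2 / (2 * beta * tfun U n)
  <= 2 * (9 / 4 + kappa ^ 2) * (3 / 2) ^ 3 / beta ^ 3 * n ^ 4.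
Proof.
  intros hn ht.
  set (t := tfun U n) in *. set (G := Gfun kappa U n).
  assert (hG : 0 < G <= 9 / 4 + kappa ^ 2).
  { split; [apply Gfun_pos; unfold t in ht; lra |].
    unfold G, Gfun. fold t. nra. }
  assert (he : (disc_root n - beta) ^ 2 <= (2 * n ^ 2 * t ^ 2 / beta) ^ 2).
  { replace ((2 * n ^ 2 * t ^ 2 / beta) ^ 2)
      with ((4 * n ^ 2 * t ^ 2) ^ 2 / (4 * beta ^ 2)) by (field; lra).
    apply sqrt_sub_sq_le; [exact hbeta | nra | left; apply disc_root_pos | apply disc_root_sq]. }
  apply Rle_trans with (G * (2 * n ^ 2 * t ^ 2 / beta) ^ 2 / (2 * beta * t)).
  { unfold Rdiv at 1 3. apply Rmult_le_compat_r.
    - left. apply Rinv_0_lt_compat. nra.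
    - apply Rmult_le_compat_l; lra. }
  replace (G * (2 * n ^ 2 * t ^ 2 / beta) ^ 2 / (2 * beta * t))
    with (2 * (G * t ^ 3) / beta ^ 3 * n ^ 4) by (field; lra).
  assert (hGt : G * t ^ 3 <= (9 / 4 + kappa ^ 2) * (3 / 2) ^ 3).
  { apply Rmult_le_compat; try lra.
    - apply pow_le. lra.
    - apply pow_incr. lra. }
  assert (0 <= n ^ 4) by (apply pow_le; exact hn).
  assert (0 < / beta ^ 3) by (apply Rinv_0_lt_compat, pow_lt, hbeta).
  unfold Rdiv. apply Rmult_le_compat_r; [assumption |].
  apply Rmult_le_compat_r; nra.
Qed.

Lemma lam2_root_remainder_O4 : exists M : R, forall n : R,
  0 <= n <= 1 -> Rabs (U * n) <= 1 / 2 ->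
  Rabs (n ^ 4 * delta_rem_coef n / tfun U n
        - Gfun kappa U n * (disc_root n - beta) ^ 2 / (2 * beta * tfun U n)) <= M * n ^ 4.
Proof.
  set (Qb := (6 * U ^ 2 + kappa ^ 2 * beta ^ 2 * U ^ 4 + 8 * Rabs U ^ 3 + 2 * U ^ 4) / beta).
  exists (2 * Qb + 2 * (9 / 4 + kappa ^ 2) * (3 / 2) ^ 3 / beta ^ 3).
  intros n hn hUn.
  pose proof (tfun_bounds U n hUn) as ht.
  pose proof (delta_rem_coef_bound n hn) as hQ. fold Qb in hQ.
  pose proof (disc_root_remainder_bound n ltac:(lra) ht) as hr.
  set (t := tfun U n) in *.
  assert (hn4 : 0 <= n ^ 4) by (apply pow_le; lra).
  assert (hrat : Rabs (n ^ 4 * delta_rem_coef n / t) <= 2 * Qb * n ^ 4).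
  { unfold Rdiv. rewrite !Rabs_mult, (Rabs_right (n ^ 4)), Rabs_inv, (Rabs_right t) by lra.
    assert (/ t <= 2) by (replace 2 with (/ (1 / 2)) by field; apply Rinv_le_contravar; lra).
    assert (0 < / t) by (apply Rinv_0_lt_compat; lra).
    pose proof (Rabs_pos (delta_rem_coef n)).
    assert (Rabs (delta_rem_coef n) * / t <= Qb * 2) by (apply Rmult_le_compat; lra).
    nra. }
  assert (hr0 : 0 <= Gfun kappa U n * (disc_root n - beta) ^ 2 / (2 * beta * t)).
  { unfold Rdiv. apply Rmult_le_pos.
    - apply Rmult_le_pos; [unfold Gfun; fold t; nra | apply pow2_ge_0].
    - left. apply Rinv_0_lt_compat. nra. }
  eapply Rle_trans; [apply Rabs_triang |].
  rewrite Rabs_Ropp, (Rabs_right (_ / (2 * beta * t))) by lra.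
  lra.
Qed.

End Expansion.

Theorem mainTheorem5 (kappa beta U : R) (hkappa : 0 <= kappa) (hbeta : 0 < beta) :
  exists eps M : R, 0 < eps /\
    (forall n : R, 0 < n < eps ->
       0 < tfun U n /\
       (forall x : R, 0 < x /\ lam2_eq kappa beta U n x <-> x = lambda2 kappa beta U n) /\
       Rabs (delta kappa beta U n
             - (coefA kappa beta U * n + coefB kappa beta U * n ^ 2
                + coefC kappa beta U * n ^ 3)) <= M * n ^ 4).
Proof.
  destruct (lam2_root_remainder_O4 kappa beta U hbeta) as [M hM].
  exists (/ (2 * (Rabs U + 1))), M.
  split; [apply Rinv_0_lt_compat; pose proof (Rabs_pos U); lra |].
  intros n hn.
  destruct (small_n_bounds U n hn) as [hn1 hUn].
  pose proof (tfun_bounds U n hUn) as ht.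
  assert (hl : lambda2 kappa beta U n = lam2_root kappa beta U n)
    by (apply lambda2_root; lra).
  split; [lra |]. split.
  - intros x. rewrite hl. apply lam2_eq_iff_root; lra.
  - unfold delta. rewrite hl, lam2_root_expansion by lra.
    apply hM; lra.
Qed.
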